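(* Let $\kappa>0$, $u_0>0$, and consider the sessile liquid channel with parameter $u_0$ and contact angle $\gamma\in(0,\pi/2]$ resting on $\Pi$, with volume $\mathcal V(\gamma)$. Then $$\mathcal V(\gamma)>\frac{\gamma-\sin\gamma\cos\gamma}{\kappa^2u(\gamma)^2}.$$
   Context: For $u_0>0$, $(r(\psi),u(\psi))$, $\psi\in[0,\pi]$, is the solution of $\frac{dr}{d\psi}=\frac{\cos\psi}{\kappa u}$, $\frac{du}{d\psi}=\frac{\sin\psi}{\kappa u}$, $r(0)=0$, $u(0)=u_0$ (profile of a $\kappa$-cylindrical surface parametrized by inclination angle). The channel with contact angle $\gamma$ is the arc $\psi\in[0,\gamma]$ reflected in $r\mapsto-r$, resting on the line $u=u(\gamma)$; its volume per unit length is $\mathcal V(\gamma)=2\big(r(\gamma)u(\gamma)-\frac{\sin\gamma}\kappa\big)$. *)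

From Stdlib Require Import Reals Lra.
From Coquelicot Require Import Coquelicot.
Open Scope R_scope.

(* (r,u) is the profile of a kappa-cylindrical surface parametrized by the
   inclination angle psi in [0,pi], with parameter u0:
     dr/dpsi = cos psi / (kappa u),  du/dpsi = sin psi / (kappa u),
     r(0) = 0, u(0) = u0,
   with u nonvanishing on [0,pi] so that the ODE makes sense. *)
Definition kappa_profile (kappa u0 : R) (r u : R -> R) : Prop :=
  r 0 = 0 /\ u 0 = u0 /\
  (forall psi, 0 <= psi <= PI -> u psi <> 0) /\
  (forall psi, 0 <= psi <= PI -> is_derive r psi (cos psi / (kappa * u psi))) /\
  (forall psi, 0 <= psi <= PI -> is_derive u psi (sin psi / (kappa * u psi))).

Definition channel_volume (kappa : R) (r u : R -> R) (gamma : R) : R :=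
  2 * (r gamma * u gamma - sin gamma / kappa).

From Stdlib Require Import Reals Lra.
From Coquelicot Require Import Coquelicot.
Open Scope R_scope.

(* Along the profile [(u^2)' = 2 sin / kappa], so [u^2 = u0^2 + 2 (1 - cos) / kappa]
   and [u] increases; on [[0, gamma]] with [gamma <= PI/2] we thus have
   [u <= U := u gamma] and, comparing slopes, [r >= sin / (kappa U)].  The
   function [F t = r u - sin / kappa - (t - sin t cos t) / (2 kappa^2 U^2)]
   vanishes at [0] and has derivative
   [r sin / (kappa u) - (sin / (kappa U))^2 >= (sin / (kappa U)) (sin / (kappa u) - sin / (kappa U)) >= 0],
   strictly positive inside [(0, gamma)]; hence [F gamma > 0], which is the
   claim. *)

Lemma is_derive_continuity_pt (f : R -> R) (x l : R) :
  is_derive f x l -> continuity_pt f x.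
Proof.
  intro hf. apply derivable_continuous_pt. exists l. now apply is_derive_Reals.
Qed.

Lemma MVT_closed (f df : R -> R) (a b : R) :
  a <= b -> (forall x, a <= x <= b -> is_derive f x (df x)) ->
  exists c, a <= c <= b /\ f b - f a = df c * (b - a).
Proof.
  intros hab hf.
  destruct (MVT_gen f a b df) as [c [hc e]];
    rewrite ?Rmin_left, ?Rmax_right in * by lra.
  - intros x hx. apply hf. lra.
  - intros x hx. apply (is_derive_continuity_pt _ _ _ (hf x hx)).
  - now exists c.
Qed.

Lemma nondecr_of_derive_nonneg (f df : R -> R) (a b : R) :
  a <= b -> (forall x, a <= x <= b -> is_derive f x (df x)) ->
  (forall x, a <= x <= b -> 0 <= df x) -> f a <= f b.
Proof.
  intros hab hf hdf.
  destruct (MVT_closed f df a b hab hf) as [c [hc e]].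
  assert (0 <= df c * (b - a)) by (apply Rmult_le_pos; [apply hdf|]; lra).
  lra.
Qed.

Lemma const_of_derive_zero (f : R -> R) (a b : R) :
  a <= b -> (forall x, a <= x <= b -> is_derive f x 0) -> f b = f a.
Proof.
  intros hab hf.
  destruct (MVT_closed f (fun _ => 0) a b hab hf) as [c [_ e]].
  lra.
Qed.

(* The derivative may vanish at the endpoints: compare the two endpoints with
   interior points and use [incr_function] strictly inside. *)
Lemma incr_of_derive_pos_interior (f df : R -> R) (a b : R) :
  a < b -> (forall x, a <= x <= b -> is_derive f x (df x)) ->
  (forall x, a <= x <= b -> 0 <= df x) -> (forall x, a < x < b -> 0 < df x) ->
  f a < f b.
Proof.
  intros hab hf hdf hpos.
  set (x := (2 * a + b) / 3); set (y := (a + 2 * b) / 3).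
  assert (f a <= f x)
    by (apply (nondecr_of_derive_nonneg f df); intros; unfold x in *;
        [lra | apply hf | apply hdf]; lra).
  assert (f y <= f b)
    by (apply (nondecr_of_derive_nonneg f df); intros; unfold y in *;
        [lra | apply hf | apply hdf]; lra).
  assert (f x < f y).
  { apply (incr_function f a b df); simpl; unfold x, y; intros; try lra.
    - apply hf; lra.
    - apply Rlt_gt, hpos; lra. }
  lra.
Qed.

Lemma pos_of_continuous_nonvanishing (f : R -> R) (a b : R) :
  (forall x, a <= x <= b -> continuity_pt f x) ->
  (forall x, a <= x <= b -> f x <> 0) -> 0 < f a ->
  forall x, a <= x <= b -> 0 < f x.
Proof.
  intros hc hnz ha x hx.
  destruct (Rlt_or_le 0 (f x)) as [|hle]; [assumption | exfalso].
  assert (f x <> 0) by (apply hnz; lra).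
  assert (a < x) by (destruct (Req_dec a x); [subst; lra | lra]).
  destruct (Ranalysis5.IVT_interv (fun t => - f t) a x) as [z [hz ez]];
    try lra.
  - intros t ht. apply continuity_pt_opp, hc. lra.
  - apply (hnz z); lra.
Qed.

(* Twice [volume_gap kappa r u (u gamma) gamma] is the difference of the two
   sides of the theorem. *)
Definition volume_gap (kappa : R) (r u : R -> R) (U t : R) : R :=
  r t * u t - sin t / kappa - (t - sin t * cos t) / (2 * kappa ^ 2 * U ^ 2).

Section Profile.

Variables (kappa : R) (r u : R -> R).
Hypothesis kappa_pos : 0 < kappa.
Hypothesis u_0_pos : 0 < u 0.
Hypothesis r_0 : r 0 = 0.
Hypothesis u_neq0 : forall psi, 0 <= psi <= PI -> u psi <> 0.
Hypothesis r_derive :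
  forall psi, 0 <= psi <= PI -> is_derive r psi (cos psi / (kappa * u psi)).
Hypothesis u_derive :
  forall psi, 0 <= psi <= PI -> is_derive u psi (sin psi / (kappa * u psi)).

Lemma profile_u_pos psi : 0 <= psi <= PI -> 0 < u psi.
Proof.
  apply (pos_of_continuous_nonvanishing u 0 PI); [|exact u_neq0|exact u_0_pos].
  intros x hx. exact (is_derive_continuity_pt _ _ _ (u_derive x hx)).
Qed.

Lemma profile_u_sqr psi :
  0 <= psi <= PI -> u psi ^ 2 = u 0 ^ 2 + 2 * (1 - cos psi) / kappa.
Proof.
  intros hpsi.
  enough (u psi ^ 2 - 2 * (1 - cos psi) / kappa = u 0 ^ 2 - 2 * (1 - cos 0) / kappa)
    by (rewrite cos_0 in *; lra).
  apply (const_of_derive_zero (fun t => u t ^ 2 - 2 * (1 - cos t) / kappa));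
    [lra|].
  intros t ht.
  assert (0 < u t) by (apply profile_u_pos; lra).
  assert (hu := u_derive t ltac:(lra)).
  auto_derive; [eexists; exact hu|].
  change (Derive (fun x : R => u x) t) with (Derive u t).
  rewrite (is_derive_unique u t _ hu).
  field; lra.
Qed.

Lemma profile_u_lt x y : 0 <= x -> x < y -> y <= PI -> u x < u y.
Proof.
  intros hx hxy hy.
  assert (0 < u x) by (apply profile_u_pos; lra).
  assert (0 < u y) by (apply profile_u_pos; lra).
  assert (cos y < cos x) by (apply cos_decreasing_1; lra).
  apply Rsqr_incrst_0; [|lra|lra].
  rewrite !Rsqr_pow2, (profile_u_sqr x), (profile_u_sqr y) by lra.
  apply Rplus_lt_compat_l, Rmult_lt_compat_r; [apply Rinv_0_lt_compat|]; lra.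
Qed.

Lemma profile_u_le x y : 0 <= x <= y -> y <= PI -> u x <= u y.
Proof.
  intros hxy hy.
  destruct (Req_dec x y) as [->|]; [lra|].
  left; apply profile_u_lt; lra.
Qed.

Lemma profile_r_ge psi gamma :
  0 <= psi <= gamma -> gamma <= PI / 2 -> sin psi / (kappa * u gamma) <= r psi.
Proof.
  intros hpsi hgamma.
  assert (PI_pos := PI_RGT_0).
  assert (0 < u gamma) by (apply profile_u_pos; lra).
  enough (r 0 - sin 0 / (kappa * u gamma) <= r psi - sin psi / (kappa * u gamma))
    by (rewrite r_0, sin_0 in *; lra).
  apply (nondecr_of_derive_nonneg (fun t => r t - sin t / (kappa * u gamma))
           (fun t => cos t / (kappa * u t) - cos t / (kappa * u gamma)));
    [lra | |].
  - intros t ht.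
    assert (0 < u t) by (apply profile_u_pos; lra).
    assert (hr := r_derive t ltac:(lra)).
    auto_derive; [eexists; exact hr|].
    change (Derive (fun x : R => r x) t) with (Derive r t).
    rewrite (is_derive_unique r t _ hr).
    field; lra.
  - intros t ht.
    assert (0 <= cos t) by (apply cos_ge_0; lra).
    assert (0 < u t) by (apply profile_u_pos; lra).
    assert (u t <= u gamma) by (apply profile_u_le; lra).
    assert (/ (kappa * u gamma) <= / (kappa * u t))
      by (apply Rinv_le_contravar, Rmult_le_compat_l; try apply Rmult_lt_0_compat; lra).
    unfold Rdiv. rewrite <- Rmult_minus_distr_l.
    apply Rmult_le_pos; lra.
Qed.

Lemma volume_gap_derive U t :
  U <> 0 -> 0 <= t <= PI ->
  is_derive (volume_gap kappa r u U) t
    (r t * (sin t / (kappa * u t)) - (sin t / (kappa * U)) ^ 2).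
Proof.
  intros hU ht.
  assert (0 < u t) by (apply profile_u_pos; lra).
  assert (hr := r_derive t ht); assert (hu := u_derive t ht).
  unfold volume_gap.
  auto_derive; [split; [eexists; exact hr | split; [eexists; exact hu | auto]]|].
  change (Derive (fun x : R => r x) t) with (Derive r t).
  change (Derive (fun x : R => u x) t) with (Derive u t).
  rewrite (is_derive_unique r t _ hr), (is_derive_unique u t _ hu).
  assert (sin t ^ 2 + cos t ^ 2 = 1) by (rewrite <- (sin2_cos2 t); unfold Rsqr; ring).
  replace (1 * cos t * cos t) with (1 - sin t ^ 2) by lra.
  field; lra.
Qed.

Lemma volume_gap_slope_nonneg t gamma :
  0 <= t <= gamma -> gamma <= PI / 2 ->
  (sin t / (kappa * u gamma)) ^ 2 <= r t * (sin t / (kappa * u t)).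
Proof.
  intros ht hgamma.
  assert (PI_pos := PI_RGT_0).
  assert (0 < u t) by (apply profile_u_pos; lra).
  assert (u t <= u gamma) by (apply profile_u_le; lra).
  assert (0 <= sin t) by (apply sin_ge_0; lra).
  assert (sin t / (kappa * u gamma) <= r t) by (apply profile_r_ge; lra).
  assert (0 <= sin t / (kappa * u gamma))
    by (apply Rdiv_le_0_compat; [|apply Rmult_lt_0_compat]; lra).
  assert (sin t / (kappa * u gamma) <= sin t / (kappa * u t)).
  { apply Rmult_le_compat_l, Rinv_le_contravar, Rmult_le_compat_l;
      try apply Rmult_lt_0_compat; lra. }
  set (a := sin t / (kappa * u gamma)) in *.
  set (b := sin t / (kappa * u t)) in *.
  clearbody a b. nra.
Qed.

Lemma volume_gap_slope_pos t gamma :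
  0 < t < gamma -> gamma <= PI / 2 ->
  (sin t / (kappa * u gamma)) ^ 2 < r t * (sin t / (kappa * u t)).
Proof.
  intros ht hgamma.
  assert (PI_pos := PI_RGT_0).
  assert (0 < u t) by (apply profile_u_pos; lra).
  assert (u t < u gamma) by (apply profile_u_lt; lra).
  assert (0 < sin t) by (apply sin_gt_0; lra).
  assert (sin t / (kappa * u gamma) <= r t) by (apply profile_r_ge; lra).
  assert (0 < sin t / (kappa * u gamma))
    by (apply Rdiv_lt_0_compat; [|apply Rmult_lt_0_compat]; lra).
  assert (sin t / (kappa * u gamma) < sin t / (kappa * u t)).
  { apply Rmult_lt_compat_l, Rinv_lt_contravar, Rmult_lt_compat_l;
      try repeat apply Rmult_lt_0_compat; lra. }
  set (a := sin t / (kappa * u gamma)) in *.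
  set (b := sin t / (kappa * u t)) in *.
  clearbody a b. nra.
Qed.

Lemma volume_gap_pos gamma :
  0 < gamma <= PI / 2 -> 0 < volume_gap kappa r u (u gamma) gamma.
Proof.
  intros hgamma.
  assert (PI_pos := PI_RGT_0).
  assert (0 < u gamma) by (apply profile_u_pos; lra).
  replace 0 with (volume_gap kappa r u (u gamma) 0)
    by (unfold volume_gap; rewrite r_0, sin_0; field; lra).
  apply (incr_of_derive_pos_interior _
           (fun t => r t * (sin t / (kappa * u t)) - (sin t / (kappa * u gamma)) ^ 2));
    [lra | | |]; intros t ht.
  - apply volume_gap_derive; lra.
  - assert (h := volume_gap_slope_nonneg t gamma ht ltac:(lra)). lra.
  - assert (h := volume_gap_slope_pos t gamma ht ltac:(lra)). lra.
Qed.

End Profile.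

Theorem mainTheorem14 (kappa u0 : R) (r u : R -> R) (gamma : R) :
  0 < kappa -> 0 < u0 ->
  kappa_profile kappa u0 r u ->
  0 < gamma <= PI / 2 ->
  channel_volume kappa r u gamma >
    (gamma - sin gamma * cos gamma) / (kappa ^ 2 * (u gamma) ^ 2).
Proof.
  intros kappa_pos u0_pos [r_0 [u_0 [u_neq0 [r_derive u_derive]]]] hgamma.
  subst u0.
  assert (0 < u gamma)
    by (apply (profile_u_pos kappa); try assumption; assert (PI_pos := PI_RGT_0); lra).
  assert (gap : 0 < volume_gap kappa r u (u gamma) gamma)
    by (apply volume_gap_pos; assumption).
  unfold volume_gap, channel_volume in *.
  apply Rlt_gt.
  replace ((gamma - sin gamma * cos gamma) / (kappa ^ 2 * u gamma ^ 2))
    with (2 * ((gamma - sin gamma * cos gamma) / (2 * kappa ^ 2 * u gamma ^ 2)))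
    by (field; lra).
  lra.
Qed.
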